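(* (1) Let $\widetilde A,A,P\in GL_2(\mathbb{C})$, $E\in\mathbb{C}^{2\times 2}$ and $c\in S^1$ satisfy $cP^{*}AP=\widetilde A+E$ and $\|E\|\le \dfrac{|\det\widetilde A|}{8\|\widetilde A\|+4}$. Put $\Delta=\arg\big(\tfrac{\det\widetilde A}{\det A}\big)$. Then there exist $k\in\mathbb{Z}$ and $g\in\mathbb{C}$ with $$c=(-1)^k e^{i\Delta/2}+g,\qquad c^{-1}=(-1)^k e^{-i\Delta/2}+\overline{g},\qquad |g|\le \frac{\|E\|(8\|\widetilde A\|+4)}{|\det\widetilde A|},$$ and $$|\det P|=\Big|\frac{\det\widetilde A}{\det A}\Big|^{1/2}+r,\qquad |r|\le\frac{\|E\|(4\|\widetilde A\|+2)}{\sqrt{|\det\widetilde A\,\det A|}}.$$ (2) Let $F\in\mathbb{C}^{2\times 2}$ and $\widetilde B,B,P\in GL_2(\mathbb{C})$ satisfy $P^{T}BP=\widetilde B+F$ and $\|F\|\le\dfrac{|\det\widetilde B|}{8\|\widetilde B\|+4}$. Then, for a suitable choice of the square root, $$\det P=\sqrt{\frac{\det\widetilde B}{\det B}}+r,\qquad |r|\le\frac{\|F\|(4\|\widetilde B\|+2)}{\sqrt{|\det\widetilde B\,\det B|}}.$$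
   Context: $S^1=\{c\in\mathbb{C}:|c|=1\}$; $P^*$ is the conjugate transpose and $P^T$ the transpose of $P$. For $X=[x_{jk}]\in\mathbb{C}^{2\times 2}$, $\|X\|=\max_{j,k}|x_{jk}|$ is the max norm. $\arg$ denotes an argument of a nonzero complex number. *)

From HB Require Import structures.
From mathcomp Require Import all_boot all_order all_algebra.
From mathcomp Require Import reals trigo.
From mathcomp Require Import complex.
Set Implicit Arguments. Unset Strict Implicit. Unset Printing Implicit Defensive.
Import Order.TTheory GRing.Theory Num.Theory.
Local Open Scope ring_scope.

Notation normc := (@ComplexField.Normc.normc _).


Definition maxnorm (R : realType) (X : 'M[R[i]]_2) : R :=
  \big[Num.max/0]_(j < 2) \big[Num.max/0]_(k < 2) normc (X j k).

Definition ctrmx (R : realType) (P : 'M[R[i]]_2) : 'M[R[i]]_2 :=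
  (map_mx (@conjc R) P)^T.

Definition expi (R : realType) (t : R) : R[i] := Complex (cos t) (sin t).

Definition is_arg (R : realType) (w : R[i]) (t : R) : Prop :=
  w = (normc w)%:C%C * expi t.

From HB Require Import structures.
From mathcomp Require Import all_boot all_order all_algebra.
From mathcomp Require Import reals trigo.
From mathcomp Require Import complex.
From mathcomp Require Import ring lra.
Set Implicit Arguments.
Unset Strict Implicit.
Unset Printing Implicit Defensive.

Import Order.TTheory GRing.Theory Num.Theory.
Local Open Scope ring_scope.
Local Open Scope complex_scope.

(* Taking determinants turns the congruence into [c^2 conj(p) a p = d + dl],
   resp. [p b p = d + dl], where [p = det P], [d] is the determinant of the
   target matrix and, for 2x2 matrices, [|dl| <= 9/8 K] with
   [K = |E| (4 |At| + 2)] and [2 K <= |d|].  The number [x = |p|], resp.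
   [x = p], is then close to the root [y] of [y^2 b = d] lying on its side of
   the origin: [(x - y) (x + y) b] has size at most [|dl|], while
   [|x + y|^2 >= |x|^2 + |y|^2].  For the phase, [w = c e^(-i Delta/2)] is a
   unit complex number whose square is a positive multiple of [1 + dl / d];
   such a [w] lies within [|dl / d|] of [1] or of [-1]. *)

Lemma det2E (T : comNzRingType) (M : 'M[T]_2) :
  \det M = M 0 0 * M 1 1 - M 0 1 * M 1 0.
Proof.
rewrite (expand_det_row M 0) !big_ord_recl big_ord0 /cofactor !det_mx11 !mxE /=.
rewrite addr0 expr0 expr1 !mul1r mulN1r mulrN.
by congr (M _ _ * M _ _ - M _ _ * M _ _); apply: val_inj.
Qed.

Section ComplexFacts.
Context {R : rcfType}.
Implicit Types (x y z u w : R[i]).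
Local Notation Re := (@complex.Re R).
Local Notation Im := (@complex.Im R).

Lemma normc_ge0 x : 0 <= normc x.
Proof. by case: x => a b; apply: sqrtr_ge0. Qed.

Lemma normc_sqr x : normc x ^+ 2 = Re x ^+ 2 + Im x ^+ 2.
Proof. by case: x => a b; rewrite sqr_sqrtr // addr_ge0 ?sqr_ge0. Qed.

Lemma normc_gt0 x : x != 0 -> 0 < normc x.
Proof.
move=> x0; rewrite lt_def normc_ge0 andbT.
by apply: contra x0 => /eqP/Normc.eq0_normc ->.
Qed.

Lemma normc_conj x : normc x^* = normc x.
Proof. by case: x => a b /=; rewrite sqrrN. Qed.

Lemma normc_real (r : R) : normc r%:C = `|r|.
Proof. by rewrite /= expr0n addr0 sqrtr_sqr. Qed.

Lemma mulJc x : x^* * x = (normc x ^+ 2)%:C.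
Proof.
rewrite normc_sqr; case: x => a b; apply/eqP; rewrite eq_complex /=.
by apply/andP; split; apply/eqP; ring.
Qed.

Lemma invc_normc1 x : normc x = 1 -> x^-1 = x^*.
Proof.
move=> x1; have x0 : x != 0.
  by apply/eqP => x0; move: x1; rewrite x0 Normc.normc0 => /eqP; rewrite eq_sym oner_eq0.
by apply: (mulIf x0); rewrite mulVf // mulJc x1 expr1n.
Qed.

Lemma normc_dist_le x y : `|normc x - normc y| <= normc (x - y).
Proof. exact: (@ler_dist_dist R (Rcomplex R)). Qed.

Lemma normcB_le x y : normc (x - y) <= normc x + normc y.
Proof. exact: (@ler_normB R (Rcomplex R)). Qed.

Lemma normcM_le x y (s t : R) :
  normc x <= s -> normc y <= t -> normc (x * y) <= s * t.
Proof. by move=> xs yt; rewrite Normc.normcM ler_pM ?normc_ge0. Qed.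

(* For [u = e^(i phi)] with [|phi| <= pi/4]: [|u - 1| = 2 sin (|phi|/2) <= sin (2 |phi|)]. *)
Lemma normc_sub1_le_Im_sqr u : normc u = 1 -> 0 <= Re u -> 0 <= Re (u ^+ 2) ->
  normc (u - 1) <= `|Im (u ^+ 2)|.
Proof.
move=> /(congr1 (fun r => r ^+ 2)); rewrite normc_sqr expr1n.
case: u => x y /= u1 x0; rewrite expr2 /= => h.
rewrite -ler_sqr ?nnegrE ?sqrtr_ge0 //= sqr_sqrtr ?addr_ge0 ?sqr_ge0 // subr0.
rewrite real_normK ?num_real //.
have x1 : x <= 1 by nra.
have hx : 1 <= 2 * x ^+ 2 * (1 + x) by nra.
nra.
Qed.

Lemma unit_on_ray_Im_le w z (l : R) :
  normc w = 1 -> 0 < l -> normc z < 1 -> w = l%:C * (1 + z) ->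
  0 <= Re w /\ `|Im w| <= normc z.
Proof.
move=> /(congr1 (fun r => r ^+ 2)); rewrite normc_sqr expr1n => w1 l0.
rewrite -ltr_sqr ?nnegrE ?normc_ge0 // expr1n normc_sqr => z1 wE; move: w1 z1.
rewrite wE; case: z {w wE} => a b /=; rewrite !mul0r subr0 addr0 add0r.
move=> w1 z1; split; first by nra.
rewrite -ler_sqr ?nnegrE ?sqrtr_ge0 // sqr_sqrtr ?addr_ge0 ?sqr_ge0 //.
rewrite real_normK ?num_real //.
have lN : l ^+ 2 * ((1 + a) ^+ 2 + b ^+ 2) = 1 by rewrite -[RHS]w1; ring.
have key : (a ^+ 2 + b ^+ 2) * ((1 + a) ^+ 2 + b ^+ 2) - b ^+ 2
           = (a + (a ^+ 2 + b ^+ 2)) ^+ 2 by ring.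
have hb : b ^+ 2 <= (a ^+ 2 + b ^+ 2) * ((1 + a) ^+ 2 + b ^+ 2).
  by rewrite -subr_ge0 key sqr_ge0.
rewrite exprMn; apply: le_trans (ler_wpM2l (sqr_ge0 l) hb) _.
by rewrite mulrCA lN mulr1.
Qed.

Lemma unit_sqr_on_ray_near_sign w z (l : R) :
  normc w = 1 -> 0 < l -> normc z < 1 -> w ^+ 2 = l%:C * (1 + z) ->
  exists b : bool, normc (w - (-1) ^+ b) <= normc z.
Proof.
move=> w1 l0 z1 wE.
have w21 : normc (w ^+ 2) = 1 by rewrite expr2 Normc.normcM w1 mulr1.
have [Re_w2_ge0 Im_w2_le] := unit_on_ray_Im_le w21 l0 z1 wE.
have [Rew_ge0 | Rew_lt0] := lerP 0 (Re w).
  by exists false; apply: le_trans (normc_sub1_le_Im_sqr w1 Rew_ge0 Re_w2_ge0) Im_w2_le.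
exists true; rewrite expr1 -normcN opprB addrC.
have Nw1 : normc (- w) = 1 by rewrite normcN.
have ReNw : 0 <= Re (- w) by rewrite raddfN /= oppr_ge0 ltW.
by apply: le_trans (normc_sub1_le_Im_sqr Nw1 ReNw _) _; rewrite sqrrN.
Qed.

Lemma normc_sub_le_of_sqr x y (B D d K : R) :
  0 <= Re x * Re y + Im x * Im y -> 0 < B -> 0 < D ->
  normc (x - y) * normc (x + y) * B <= d ->
  D - d <= normc x ^+ 2 * B -> normc y ^+ 2 * B = D ->
  d <= 9 / 8 * K -> 2 * K <= D ->
  normc (x - y) <= K / Num.sqrt (D * B).
Proof.
move=> acute B0 D0; set r := normc (x - y); set S := normc (x + y) => hd hx hy dK KD.
have r0 : 0 <= r by exact: normc_ge0.
have S0 : 0 <= S by exact: normc_ge0.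
have hS : normc x ^+ 2 + normc y ^+ 2 <= S ^+ 2.
  rewrite /S !normc_sqr raddfD /= raddfD /=; nra.
have SB : 2 * D - d <= S ^+ 2 * B by nra.
have d0 : 0 <= d := le_trans (mulr_ge0 (mulr_ge0 r0 S0) (ltW B0)) hd.
have rSB : (r * S * B) ^+ 2 <= d ^+ 2 by rewrite ler_sqr ?nnegrE // !mulr_ge0 // ltW.
have K0 : 0 <= K by nra.
have d2 : d ^+ 2 <= 81 / 64 * K ^+ 2 by nra.
have Kd : K ^+ 2 * d <= 9 / 16 * (K ^+ 2 * D) by nra.
have dD : d ^+ 2 * D <= K ^+ 2 * (2 * D - d) by nra.
have sqrt0 : 0 < Num.sqrt (D * B) by rewrite sqrtr_gt0 mulr_gt0.
have d2D : 0 < 2 * D - d by nra.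
have rB : r ^+ 2 * B * (2 * D - d) <= d ^+ 2.
  apply: le_trans rSB; rewrite !exprMn.
  by have := ler_wpM2l (mulr_ge0 (sqr_ge0 r) (ltW B0)) SB; nra.
rewrite ler_pdivlMr // -ler_sqr ?nnegrE ?mulr_ge0 ?sqrtr_ge0 //.
rewrite exprMn sqr_sqrtr ?mulr_ge0 ?(ltW D0) ?(ltW B0) // -(ler_pM2r d2D); nra.
Qed.
End ComplexFacts.

Section MaxNorm.
Context {R : realType}.
Implicit Types (M X E : 'M[R[i]]_2).

Lemma normc_le_maxnorm M i j : normc (M i j) <= maxnorm M.
Proof.
rewrite /maxnorm !big_ord_recl !big_ord0.
have -> : lift 0 (0 : 'I_1) = 1 :> 'I_2 by apply: val_inj.
have ord2 (k : 'I_2) : k = 0 \/ k = 1 by case: k => [[|[|//]]] ?; [left|right]; apply: val_inj.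
by case: (ord2 i) => ->; case: (ord2 j) => ->; rewrite ?le_max ?lexx ?orbT.
Qed.

Lemma maxnorm_ge0 M : 0 <= maxnorm M.
Proof. exact: le_trans (normc_ge0 _) (normc_le_maxnorm M 0 0). Qed.

Lemma normc_det_le M : normc (\det M) <= 2 * maxnorm M ^+ 2.
Proof.
rewrite det2E; apply: le_trans (normcB_le _ _) _.
have := normcM_le (normc_le_maxnorm M 0 0) (normc_le_maxnorm M 1 1).
have := normcM_le (normc_le_maxnorm M 0 1) (normc_le_maxnorm M 1 0); lra.
Qed.

Lemma normc_det_addmx_sub_le X E :
  normc (\det (X + E) - \det X) <= 4 * maxnorm X * maxnorm E + 2 * maxnorm E ^+ 2.
Proof.
move: (normc_le_maxnorm X) (normc_le_maxnorm E).
set t := maxnorm X; set e := maxnorm E => hX hE.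
have cross (i j k l : 'I_2) :
    normc (X i j * E k l + E i j * X k l + E i j * E k l) <= 2 * t * e + e ^+ 2.
  apply: le_trans (le_normcD _ _) _; apply: le_trans (lerD (le_normcD _ _) (lexx _)) _.
  have := normcM_le (hX i j) (hE k l); have := normcM_le (hE i j) (hX k l).
  have := normcM_le (hE i j) (hE k l); nra.
rewrite !det2E !mxE.
have -> : (X 0 0 + E 0 0) * (X 1 1 + E 1 1) - (X 0 1 + E 0 1) * (X 1 0 + E 1 0)
    - (X 0 0 * X 1 1 - X 0 1 * X 1 0)
  = (X 0 0 * E 1 1 + E 0 0 * X 1 1 + E 0 0 * E 1 1)
    - (X 0 1 * E 1 0 + E 0 1 * X 1 0 + E 0 1 * E 1 0) by ring.
apply: le_trans (normcB_le _ _) _.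
have := cross 0 0 1 1; have := cross 0 1 1 0; lra.
Qed.

Lemma small_perturbation_det_bounds X E : 0 < normc (\det X) ->
  maxnorm E <= normc (\det X) / (8 * maxnorm X + 4) ->
  normc (\det (X + E) - \det X) <= 9 / 8 * (maxnorm E * (4 * maxnorm X + 2)) /\
  2 * (maxnorm E * (4 * maxnorm X + 2)) <= normc (\det X).
Proof.
move: (maxnorm_ge0 X) (maxnorm_ge0 E) (normc_det_le X) (normc_det_addmx_sub_le X E).
set t := maxnorm X; set e := maxnorm E; set D := normc _; set d := normc _.
move=> t0 e0 Dt dd D0; rewrite ler_pdivlMr; last by lra.
move=> eD; have et : e <= t / 4 by nra.
split; nra.
Qed.
End MaxNorm.

Section ScalarCongruence.
Context {R : rcfType}.
Implicit Types (q a d dl : R[i]).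
Local Notation Re := (@complex.Re R).
Local Notation Im := (@complex.Im R).

Lemma sqrt_ratio_approx q a d dl (K : R) : a != 0 -> d != 0 ->
  q * a * q = d + dl -> normc dl <= 9 / 8 * K -> 2 * K <= normc d ->
  exists s r : R[i], s ^+ 2 = d / a /\ q = s + r /\
    normc r <= K / Num.sqrt (normc (d * a)).
Proof.
move=> a0 d0 qE dlK KD.
have [s [s2 acute]] : exists s, s ^+ 2 = d / a /\ 0 <= Re q * Re s + Im q * Im s.
  set s := sqrtc (d / a).
  have [acute|obtuse] := lerP 0 (Re q * Re s + Im q * Im s).
    by exists s; rewrite sqr_sqrtc.
  by exists (- s); rewrite sqrrN sqr_sqrtc !raddfN /=; split => //; lra.
exists s, (q - s); split => //; split; first by rewrite addrC subrK.
have sE : normc s ^+ 2 * normc a = normc d.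
  by rewrite expr2 -!Normc.normcM -expr2 s2 divfK.
have qE2 : normc q ^+ 2 * normc a = normc (d + dl).
  by rewrite -qE !Normc.normcM expr2; ring.
have diffE : (q - s) * (q + s) * a = dl.
  transitivity (q * a * q - s ^+ 2 * a); first by ring.
  by rewrite qE s2 divfK // addrAC subrr add0r.
rewrite Normc.normcM; apply: (normc_sub_le_of_sqr acute _ _ _ _ sE dlK KD).
- exact: normc_gt0.
- exact: normc_gt0.
- by rewrite -!Normc.normcM diffE.
- by rewrite qE2; have := normcB_le (d + dl) dl; rewrite addrK; lra.
Qed.

Lemma normc_approx_sqrt_ratio c q a d dl (K : R) : normc c = 1 -> a != 0 -> d != 0 ->
  c ^+ 2 * (q^* * a * q) = d + dl -> normc dl <= 9 / 8 * K -> 2 * K <= normc d ->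
  exists r : R, normc q = Num.sqrt (normc (d / a)) + r /\
    `|r| <= K / Num.sqrt (normc (d * a)).
Proof.
move=> c1 a0 d0 qE dlK KD.
set p := normc q; set s := Num.sqrt _.
have a_gt0 : 0 < normc a := normc_gt0 a0.
have pE : p ^+ 2 * normc a = normc (d + dl).
  by rewrite -qE !expr2 !Normc.normcM normc_conj c1 !mul1r mulrAC.
have sE : s ^+ 2 * normc a = normc d.
  by rewrite sqr_sqrtr ?normc_ge0 // Normc.normcM Normc.normcV divfK ?gt_eqF.
exists (p - s); split; first by rewrite addrC subrK.
have acute : 0 <= Re p%:C * Re s%:C + Im p%:C * Im s%:C.
  by rewrite /= mul0r addr0 mulr_ge0 ?normc_ge0 ?sqrtr_ge0.
rewrite -normc_real rmorphB Normc.normcM.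
apply: (normc_sub_le_of_sqr acute _ _ _ _ _ dlK KD) => //; rewrite ?normc_real.
- exact: normc_gt0.
- rewrite -rmorphB -rmorphD !normc_real.
  have -> : `|p - s| * `|p + s| * normc a = `|p ^+ 2 * normc a - s ^+ 2 * normc a|.
    by rewrite -mulrBl subr_sqr !normrM (ger0_norm (ltW a_gt0)).
  by rewrite pE sE; apply: le_trans (normc_dist_le _ _) _; rewrite addrAC subrr add0r.
- by rewrite real_normK ?num_real // pE; have := normcB_le (d + dl) dl; rewrite addrK; lra.
- by rewrite real_normK ?num_real.
Qed.
End ScalarCongruence.

Section Expi.
Context {R : realType}.
Implicit Types s t : R.

Lemma expiD s t : expi (s + t) = expi s * expi t.
Proof. by apply/eqP; rewrite eq_complex /= cosD sinD; apply/andP; split; apply/eqP; ring. Qed.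

Lemma expiN t : expi (- t) = (expi t)^*.
Proof. by rewrite /expi cosN sinN. Qed.

Lemma normc_expi t : normc (expi t) = 1.
Proof. by rewrite /= cos2Dsin2 sqrtr1. Qed.

Lemma expi_half_sqr t : expi (t / 2) ^+ 2 = expi t.
Proof. by rewrite expr2 -expiD -splitr. Qed.
End Expi.

Lemma unit_approx_half_arg (R : realType) (c q a d dl : R[i]) (Delta : R) :
  normc c = 1 -> a != 0 -> c ^+ 2 * (q^* * a * q) = d + dl ->
  normc dl < normc d -> is_arg (d / a) Delta ->
  exists (k : int) (g : R[i]), c = (-1) ^ k * expi (Delta / 2) + g /\
    c^-1 = (-1) ^ k * expi (- (Delta / 2)) + g^* /\ normc g <= normc dl / normc d.
Proof.
move=> c1 a0 qE dld arg.
have d0 : d != 0 by apply: contraTneq dld => ->; rewrite Normc.normc0 -leNgt normc_ge0.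
have q0 : q != 0.
  apply: contraTneq dld => q0; move: qE; rewrite q0 !mulr0 => /esym/eqP.
  by rewrite addr_eq0 => /eqP ->; rewrite normcN ltxx.
set v := expi (Delta / 2); set m := normc (d / a); set p := normc q.
have m0 : 0 < m by rewrite normc_gt0 // mulf_neq0 ?invr_eq0.
have p0 : 0 < p := normc_gt0 q0.
have vv : v^* * v = 1 by rewrite mulJc normc_expi expr1n.
have dE : d = v ^+ 2 * m%:C * a.
  by rewrite /v expi_half_sqr [_ * m%:C]mulrC /m -arg divfK.
have c2 : c ^+ 2 = (d + dl) / ((p ^+ 2)%:C * a).
  by rewrite -qE [q^* * a * q]mulrAC mulJc mulfK // mulf_neq0 // -mulJc mulf_neq0 ?conjc_eq0.
have v2 : v^* ^+ 2 = m%:C * a / d.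
  apply: (mulIf d0); rewrite divfK //.
  transitivity ((v^* * v) ^+ 2 * m%:C * a); last by rewrite vv expr1n mul1r.
  by rewrite {1}dE; ring.
set w := c * v^*.
have w1 : normc w = 1 by rewrite Normc.normcM normc_conj c1 normc_expi mulr1.
have wE : w ^+ 2 = (m / p ^+ 2)%:C * (1 + dl / d).
  rewrite /w exprMn c2 v2 fmorph_div /=; field.
  by rewrite d0 a0 fmorph_eq0 gt_eqF.
have l0 : 0 < m / p ^+ 2 by rewrite divr_gt0 // exprn_gt0.
have z1 : normc (dl / d) < 1.
  by rewrite Normc.normcM Normc.normcV ltr_pdivrMr ?normc_gt0 // mul1r.
have [b wb] := unit_sqr_on_ray_near_sign w1 l0 z1 wE.
have cE : c = w * v by rewrite /w -mulrA vv mulr1.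
exists b, (c - (-1) ^+ b * v); rewrite -!exprnP.
split; first by rewrite addrC subrK.
split.
  rewrite invc_normc1 // expiN rmorphB rmorphM rmorphXn rmorphN1.
  by rewrite addrC subrK.
rewrite {1}cE -mulrBl Normc.normcM normc_expi mulr1.
by apply: le_trans wb _; rewrite Normc.normcM Normc.normcV.
Qed.

Theorem lemma4p1 (R : realType) :
  (forall (At A P E : 'M[R[i]]_2) (c : R[i]) (Delta : R),
      At \in unitmx -> A \in unitmx -> P \in unitmx ->
      normc c = 1 ->
      c *: (ctrmx P *m A *m P) = At + E ->
      maxnorm E <= normc (\det At) / (8 * maxnorm At + 4) ->
      is_arg (\det At / \det A) Delta ->
      (exists (k : int) (g : R[i]),
          c = (-1) ^ k * expi (Delta / 2) + g /\
          c^-1 = (-1) ^ k * expi (- (Delta / 2)) + conjc g /\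
          normc g <= maxnorm E * (8 * maxnorm At + 4) / normc (\det At)) /\
      (exists r : R,
          normc (\det P) = Num.sqrt (normc (\det At / \det A)) + r /\
          `|r| <= maxnorm E * (4 * maxnorm At + 2)
                  / Num.sqrt (normc (\det At * \det A)))) /\
  (forall (Bt B P F : 'M[R[i]]_2),
      Bt \in unitmx -> B \in unitmx -> P \in unitmx ->
      P^T *m B *m P = Bt + F ->
      maxnorm F <= normc (\det Bt) / (8 * maxnorm Bt + 4) ->
      exists (s r : R[i]),
        s ^+ 2 = \det Bt / \det B /\
        \det P = s + r /\
        normc r <= maxnorm F * (4 * maxnorm Bt + 2)
                   / Num.sqrt (normc (\det Bt * \det B))).
Proof.
have unit_det (M : 'M[R[i]]_2) : M \in unitmx -> \det M != 0 by rewrite unitmxE unitfE.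
split=> [At A P E c Delta uAt uA _ c1 congr hE arg | Bt B P F uBt uB _ congr hF].
  have [dAt dA] := (unit_det _ uAt, unit_det _ uA).
  have [dlK KD] := small_perturbation_det_bounds (normc_gt0 dAt) hE.
  have detE : c ^+ 2 * ((\det P)^* * \det A * \det P)
              = \det At + (\det (At + E) - \det At).
    by rewrite addrC subrK -congr detZ !det_mulmx det_tr det_map_mx.
  split; last exact: normc_approx_sqrt_ratio c1 dA dAt detE dlK KD.
  have dld : normc (\det (At + E) - \det At) < normc (\det At).
    by have := normc_gt0 dAt; lra.
  have [k [g [cE [ciE gle]]]] := unit_approx_half_arg c1 dA detE dld arg.
  exists k, g; do 2!split => //; apply: le_trans gle _.
  rewrite ler_pM2r ?invr_gt0 ?normc_gt0 //.
  by have := mulr_ge0 (maxnorm_ge0 E) (maxnorm_ge0 At); have := maxnorm_ge0 E; lra.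
have [dlK KD] := small_perturbation_det_bounds (normc_gt0 (unit_det _ uBt)) hF.
apply: sqrt_ratio_approx (unit_det _ uB) (unit_det _ uBt) _ dlK KD.
by rewrite addrC subrK -congr !det_mulmx det_tr.
Qed.
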